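(* Let $\ell\ge2$ and $A=\{0,1\}^\ell\setminus\{\mathbf{0},\mathbf{1}\}$. If $\mathbf{v}\in(0,1)^\ell$ satisfies $1<\|\mathbf{v}\|_1<\ell-1$, then there exists $d:A\to(0,1)$ with $\sum_{\mathbf{t}\in A}d(\mathbf{t})=1$ such that $\mathbf{v}=\sum_{\mathbf{t}\in A}d(\mathbf{t})\,\mathbf{t}$.
   Context: $\mathbf{0}$ and $\mathbf{1}$ are the all-zeros and all-ones vectors in $\mathbb{R}^\ell$; $\|\cdot\|_1$ is the $L^1$ norm. *)

From mathcomp Require Import all_boot all_order all_algebra.
From mathcomp Require Import reals.
Set Implicit Arguments. Unset Strict Implicit. Unset Printing Implicit Defensive.
Import Order.TTheory GRing.Theory Num.Theory.
Local Open Scope ring_scope.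

Definition cube (l : nat) := {ffun 'I_l -> bool}.

Definition cubeA (l : nat) : {set cube l} :=
  [set t : cube l | (t != [ffun => false]) && (t != [ffun => true])].

Definition cube_vec (R : realType) (l : nat) (t : cube l) : 'rV[R]_l :=
  \row_i ((t i : nat)%:R).

Definition norm1 (R : realType) (l : nat) (v : 'rV[R]_l) : R :=
  \sum_i `|v ord0 i|.

From mathcomp Require Import all_boot all_order all_algebra.
From mathcomp Require Import reals.
From mathcomp Require Import ring lra.
Set Implicit Arguments. Unset Strict Implicit. Unset Printing Implicit Defensive.
Import Order.TTheory GRing.Theory Num.Theory.
Local Open Scope ring_scope.

(* The points of [0,1]^l whose coordinates sum to a value in [1, l-1] (the
   "slab") are exactly the convex hull of A.  A slab point with two fractional
   coordinates i, j lies between the two slab points obtained by moving mass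
   from j to i, or from i to j, until one of these coordinates becomes 0 or 1;
   both have fewer fractional coordinates.  A slab point with at most one
   fractional coordinate k lies on the segment joining two vertices in A that
   differ only at k.
   Since A is closed under complementation, its uniform average is the centre
   (1/2, ..., 1/2).  For small eps, v = eps (1/2, ..., 1/2) + (1 - eps) w with w
   in the slab, so v gets weights of at least eps / #|A|; no weight can reach 1,
   because the complementary vertex also has positive weight. *)

Section CubeHull.
Variables (R : realType) (l : nat).
Implicit Types (w : 'I_l -> R) (t : cube l).

Definition cubeA_hull w := exists d : cube l -> R,
  [/\ forall t, 0 <= d t, \sum_(t in cubeA l) d t = 1 &
      forall k, w k = \sum_(t in cubeA l) d t * (t k : nat)%:R].

Definition slab w := (forall k, 0 <= w k <= 1) /\ 1 <= \sum_k w k <= l%:R - 1.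

Lemma cubeA_hull_vertex t w :
  t \in cubeA l -> (forall k, w k = (t k : nat)%:R) -> cubeA_hull w.
Proof.
move=> tA wE; exists (fun s => (s == t)%:R); split.
- by move=> s; rewrite ler0n.
- by rewrite (bigD1 t) //= eqxx big1 ?addr0 // => s /andP[_ /negPf ->].
- move=> k; rewrite wE (bigD1 t) //= eqxx mul1r big1 ?addr0 //.
  by move=> s /andP[_ /negPf ->]; rewrite mul0r.
Qed.

Lemma cubeA_hull_convex w1 w2 w a :
  0 <= a <= 1 -> cubeA_hull w1 -> cubeA_hull w2 ->
  (forall k, w k = a * w1 k + (1 - a) * w2 k) -> cubeA_hull w.
Proof.
move=> /andP[a_ge0 a_le1] [d1 [d1_ge0 d1_sum d1_w]] [d2 [d2_ge0 d2_sum d2_w]] wE.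
exists (fun t => a * d1 t + (1 - a) * d2 t); split.
- by move=> t; rewrite addr_ge0 // mulr_ge0 // subr_ge0.
- by rewrite big_split /= -!mulr_sumr d1_sum d2_sum !mulr1 addrC subrK.
- move=> k; rewrite wE d1_w d2_w !mulr_sumr -big_split /=.
  by apply: eq_bigr => t _; ring.
Qed.

Lemma cubeA_of_sum t : 0 < \sum_k ((t k : nat)%:R : R) < l%:R -> t \in cubeA l.
Proof.
move=> /andP[sum_gt0 sum_ltl]; rewrite inE; apply/andP; split; apply/eqP => tE.
  by move: sum_gt0; rewrite big1 ?ltxx // => k _; rewrite tE ffunE.
move: sum_ltl; rewrite (eq_bigr (fun=> 1)) => [|k _]; last by rewrite tE ffunE.
by rewrite sumr_const card_ord ltxx.
Qed.

Definition frac w : {set 'I_l} := [set k | 0 < w k < 1].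

Lemma nonfrac_bool w k :
  0 <= w k <= 1 -> k \notin frac w -> w k = (w k == 1 : nat)%:R.
Proof.
rewrite inE negb_and -!leNgt => /andP[w_ge0 w_le1] /orP[w_le0|w_ge1].
  have -> : w k = 0 by apply/eqP; rewrite eq_le w_le0 w_ge0.
  by rewrite eq_sym oner_eq0.
have -> : w k = 1 by apply/eqP; rewrite eq_le w_ge1 w_le1.
by rewrite eqxx.
Qed.

Lemma cubeA_hull_frac0 w : slab w -> frac w = set0 -> cubeA_hull w.
Proof.
move=> [w01 /andP[sum_ge1 sum_le]] frac0.
have wE k : w k = (w k == 1 : nat)%:R by apply: nonfrac_bool; rewrite ?frac0 ?inE.
apply: (@cubeA_hull_vertex [ffun k => w k == 1]) => [|k]; last by rewrite ffunE.
apply: cubeA_of_sum; under eq_bigr => k _ do rewrite ffunE -wE.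
by apply/andP; split; lra.
Qed.

Lemma cubeA_hull_frac1 w k : slab w -> frac w = [set k] -> cubeA_hull w.
Proof.
move=> [w01 /andP[sum_ge1 sum_le]] fracE.
have : k \in frac w by rewrite fracE set11.
rewrite inE => /andP[wk_gt0 wk_lt1].
have wE i : i != k -> w i = (w i == 1 : nat)%:R.
  by move=> ik; apply: nonfrac_bool; rewrite ?fracE ?inE.
pose round b : cube l := [ffun i => if i == k then b else w i == 1].
have round_sum b : \sum_i (round b i : nat)%:R = (b : nat)%:R + \sum_(i | i != k) w i.
  rewrite (bigD1 k) //= ffunE eqxx; congr (_ + _).
  by apply: eq_bigr => i ik; rewrite ffunE (negbTE ik) -wE.
have sumE : \sum_i w i = w k + \sum_(i | i != k) w i by rewrite (bigD1 k).
apply: (@cubeA_hull_convex (fun i => (round false i : nat)%:R)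
                           (fun i => (round true i : nat)%:R) _ (1 - w k)).
- by apply/andP; split; lra.
- apply: cubeA_hull_vertex => //; apply: cubeA_of_sum.
  by rewrite round_sum add0r; apply/andP; split; lra.
- apply: cubeA_hull_vertex => //; apply: cubeA_of_sum.
  by rewrite round_sum -[(true : nat)%:R]/(1 : R); apply/andP; split; lra.
- move=> i; rewrite !ffunE; have [->|ik] := eqVneq i k; first by rewrite /=; ring.
  by rewrite {1}(wE i ik); ring.
Qed.

Definition transfer w i j := Num.min (1 - w i) (w j).

Definition shift w i j k := w k + transfer w i j * ((k == i)%:R - (k == j)%:R).

Lemma transfer_gt0 w i j : i \in frac w -> j \in frac w -> 0 < transfer w i j.
Proof.
by rewrite !inE => /andP[_ wi_lt1] /andP[wj_gt0 _]; rewrite lt_min subr_gt0 wi_lt1.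
Qed.

Lemma sum_shift w i j : \sum_k shift w i j k = \sum_k w k.
Proof.
have sum_delta m : \sum_k ((k == m)%:R : R) = 1.
  by rewrite (bigD1 m) //= eqxx big1 ?addr0 // => k /negPf ->.
by rewrite big_split /= -mulr_sumr sumrB !sum_delta subrr mulr0 addr0.
Qed.

Lemma shift_slab w i j : i != j -> i \in frac w -> j \in frac w -> slab w ->
  slab (shift w i j) /\ frac (shift w i j) \proper frac w.
Proof.
move=> ij iF jF [w01 sum_w]; have tr_gt0 := transfer_gt0 iF jF.
have tr_le_i : transfer w i j <= 1 - w i by rewrite ge_min lexx.
have tr_le_j : transfer w i j <= w j by rewrite ge_min lexx orbT.
have shift_i : shift w i j i = w i + transfer w i j.
  by rewrite /shift eqxx (negbTE ij) subr0 mulr1.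
have shift_j : shift w i j j = w j - transfer w i j.
  by rewrite /shift eqxx eq_sym (negbTE ij) sub0r mulrN1.
have shift_k k : k != i -> k != j -> shift w i j k = w k.
  by move=> /negbTE ki /negbTE kj; rewrite /shift ki kj subrr mulr0 addr0.
split; first split; last first.
- apply/properP; split.
    apply/subsetP => k; have [->|ki] := eqVneq k i => //.
    by have [->|kj] := eqVneq k j => //; rewrite !inE shift_k.
  have [wij|wij] := leP (1 - w i) (w j).
    exists i => //; rewrite inE shift_i /transfer (min_l wij).
    by apply/negP => /andP[_]; lra.
  exists j => //; rewrite inE shift_j /transfer (min_r (ltW wij)).
  by apply/negP => /andP[]; lra.
- by rewrite sum_shift.
- move=> k; have [->|ki] := eqVneq k i; first by rewrite shift_i; move: (w01 i); lra.
  have [->|kj] := eqVneq k j; first by rewrite shift_j; move: (w01 j); lra.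
  by rewrite shift_k.
Qed.

Lemma shift_convex w i j : i \in frac w -> j \in frac w ->
  exists2 a, 0 <= a <= 1 & forall k, w k = a * shift w i j k + (1 - a) * shift w j i k.
Proof.
move=> iF jF; have tij := transfer_gt0 iF jF; have tji := transfer_gt0 jF iF.
have sum_gt0 : 0 < transfer w i j + transfer w j i by rewrite addr_gt0.
exists (transfer w j i / (transfer w i j + transfer w j i)).
  by rewrite ler_pdivrMr // mul1r lerDr (ltW tij) divr_ge0 ?ltW //.
by move=> k; rewrite /shift; field; rewrite gt_eqF.
Qed.

Lemma slab_cubeA_hull w : slab w -> cubeA_hull w.
Proof.
have [n] := ubnP #|frac w|; elim: n w => // n IHn w; rewrite ltnS => frac_le slab_w.
have [|/card_gt1P[i [j [iF jF ij]]]] := leqP #|frac w| 1.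
  rewrite leq_eqVlt ltnS leqn0 => /orP[/cards1P[k fracE] | /eqP/cards0_eq frac0].
    exact: cubeA_hull_frac1 fracE.
  exact: cubeA_hull_frac0.
have ji : j != i by rewrite eq_sym.
have [slab_ij frac_ij] := shift_slab ij iF jF slab_w.
have [slab_ji frac_ji] := shift_slab ji jF iF slab_w.
have [a a01 wE] := shift_convex iF jF.
apply: (cubeA_hull_convex a01 _ _ wE); apply: IHn => //;
  by apply: leq_trans frac_le; apply: proper_card.
Qed.

Definition cube_compl t : cube l := [ffun k => ~~ t k].

Lemma cube_complK : involutive cube_compl.
Proof. by move=> t; apply/ffunP => k; rewrite !ffunE negbK. Qed.

Lemma cube_compl_cubeA t : (cube_compl t \in cubeA l) = (t \in cubeA l).
Proof.
have complE b : (cube_compl t == [ffun => b]) = (t == [ffun => ~~ b]).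
  rewrite -(inj_eq (can_inj cube_complK)) cube_complK; congr (_ == _).
  by apply/ffunP => k; rewrite !ffunE.
by rewrite !inE !complE andbC.
Qed.

Lemma cube_compl_neq t : t \in cubeA l -> cube_compl t != t.
Proof.
rewrite inE => /andP[/eqP t_neq0 _]; apply: contra_not_neq t_neq0 => complE.
apply/ffunP => k; rewrite ffunE; apply/negbTE/negP => tk.
by move/ffunP: complE => /(_ k); rewrite ffunE tk.
Qed.

Lemma sum_cubeA_coord k :
  \sum_(t in cubeA l) ((t k : nat)%:R : R) = #|cubeA l|%:R / 2.
Proof.
have sum_compl : \sum_(t in cubeA l) ((t k : nat)%:R : R) =
                 \sum_(t in cubeA l) (1 - (t k : nat)%:R).
  rewrite (reindex_inj (can_inj cube_complK)) /=.
  apply: eq_big => [t|t _]; first by rewrite cube_compl_cubeA.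
  by rewrite ffunE; case: (t k); rewrite /= ?subrr ?subr0.
move: sum_compl; rewrite sumrB sumr_const -[_ *+ _]mulr_natr mul1r; lra.
Qed.

Lemma cubeA_hull_interior w eps : 0 < eps <= 1 -> cubeA_hull w ->
  exists d : cube l -> R,
    [/\ forall t, t \in cubeA l -> 0 < d t, \sum_(t in cubeA l) d t = 1 &
        forall k, eps / 2 + (1 - eps) * w k = \sum_(t in cubeA l) d t * (t k : nat)%:R].
Proof.
move=> /andP[eps_gt0 eps_le1] [dw [dw_ge0 dw_sum dw_w]].
have N_gt0 : 0 < #|cubeA l|%:R :> R.
  rewrite ltr0n lt0n; apply/eqP => /card0_eq A0; move: dw_sum.
  by rewrite big_pred0 => [/eqP|t]; rewrite ?A0 // eq_sym oner_eq0.
exists (fun t => eps / #|cubeA l|%:R + (1 - eps) * dw t); split.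
- move=> t _; apply: ltr_pwDl; first by rewrite divr_gt0.
  by rewrite mulr_ge0 // subr_ge0.
- rewrite big_split /= sumr_const -mulr_sumr dw_sum -[_ *+ #|cubeA l|]mulr_natr.
  by rewrite divfK ?gt_eqF // mulr1 addrC subrK.
- move=> k; rewrite dw_w; under [RHS]eq_bigr do rewrite mulrDl -!mulrA.
  rewrite big_split /= -!mulr_sumr sum_cubeA_coord.
  by field; rewrite gt_eqF.
Qed.

Lemma cubeA_weight_lt1 (d : cube l -> R) t :
  (forall s, s \in cubeA l -> 0 < d s) -> \sum_(s in cubeA l) d s = 1 ->
  t \in cubeA l -> d t < 1.
Proof.
move=> d_gt0 d_sum tA.
have compl_tA : cube_compl t \in cubeA l by rewrite cube_compl_cubeA.
have rest_ge0 : 0 <= \sum_(s | (s \in cubeA l) && (s != t) && (s != cube_compl t)) d s.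
  by apply: sumr_ge0 => s /andP[/andP[sA _] _]; rewrite ltW ?d_gt0.
move: d_sum; rewrite (bigD1 t) //= (bigD1 (cube_compl t)) /=; last first.
  by rewrite compl_tA cube_compl_neq.
by move: (d_gt0 _ compl_tA); lra.
Qed.

Lemma slab_shrink (v : 'I_l -> R) :
  (forall k, 0 < v k < 1) -> 1 < \sum_k v k < l%:R - 1 ->
  exists eps w, [/\ 0 < eps < 1, slab w & forall k, v k = eps / 2 + (1 - eps) * w k].
Proof.
move=> v01 /andP[sum_gt1 sum_lt]; have l_gt2 : 2 < l%:R :> R by lra.
pose c := Num.min (\sum_k v k - 1) (l%:R - 1 - \sum_k v k).
have c_gt0 : 0 < c by rewrite lt_min !subr_gt0 sum_gt1 /=; lra.
have c_le1 : c <= \sum_k v k - 1 by rewrite ge_min lexx.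
have c_le2 : c <= l%:R - 1 - \sum_k v k by rewrite ge_min lexx orbT.
pose eps := \big[Num.min/c / l%:R]_k Num.min (v k) (1 - v k).
have eps_gt0 : 0 < eps.
  apply: lt_bigmin => [|k _]; first by rewrite divr_gt0 //; lra.
  by have /andP[vk_gt0 vk_lt1] := v01 k; rewrite lt_min subr_gt0 vk_gt0.
have eps_l : eps * l%:R <= c by rewrite -ler_pdivlMr ?bigmin_le_id //; lra.
have eps_v k : eps <= v k /\ eps <= 1 - v k.
  have : eps <= Num.min (v k) (1 - v k) by apply: bigmin_le.
  by rewrite le_min => /andP.
have eps_lt1 : eps < 1 by rewrite -(ltr_pM2r (_ : 0 < l%:R)); lra.
exists eps, (fun k => (v k - eps / 2) / (1 - eps)); split.
- by rewrite eps_gt0 eps_lt1.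
- split=> [k|].
    have [eps_vk eps_1vk] := eps_v k.
    by rewrite divr_ge0 ?ler_pdivrMr /=; lra.
  rewrite -mulr_suml sumrB sumr_const card_ord -[_ *+ l]mulr_natr.
  by rewrite ler_pdivlMr ?ler_pdivrMr ?subr_gt0 //=; apply/andP; split; nra.
- by move=> k; field; rewrite subr_eq0 gt_eqF.
Qed.

End CubeHull.

Theorem lemma14 (R : realType) (l : nat) (hl : (2 <= l)%N) (v : 'rV[R]_l) :
  (forall i, 0 < v ord0 i < 1) ->
  1 < norm1 v < l%:R - 1 ->
  exists d : cube l -> R,
    (forall t, t \in cubeA l -> 0 < d t < 1) /\
    \sum_(t in cubeA l) d t = 1 /\
    v = \sum_(t in cubeA l) d t *: cube_vec R t.
Proof.
move=> v01 norm_v.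
have norm1E : norm1 v = \sum_k v ord0 k.
  by apply: eq_bigr => k _; rewrite ger0_norm // ltW //; case/andP: (v01 k).
rewrite norm1E in norm_v.
have [eps [w [eps01 slab_w vE]]] := slab_shrink v01 norm_v.
have eps_in : 0 < eps <= 1 by case/andP: eps01 => -> /ltW.
have [d [d_gt0 d_sum d_v]] := cubeA_hull_interior eps_in (slab_cubeA_hull slab_w).
exists d; split; [|split] => //.
  by move=> t tA; rewrite d_gt0 // cubeA_weight_lt1.
apply/rowP => k; rewrite vE d_v summxE; apply: eq_bigr => t _.
by rewrite !mxE.
Qed.
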